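(* Let $v,w\in\mathfrak{S}_n$ with $v$ boolean, and fix a reduced word $s$ for $v$. Let $\mathcal{W}(v,w)$ be the set of all subwords of $s$ of the form $i(i+1)\cdots(i+j)$ or $(i+j)\cdots(i+1)i$ (with $j\ge0$) such that: in the first case, the permutation $[i(i+1)\cdots(i+j)]\not\le w$ while $[i(i+1)\cdots(i+j-1)]\le w$ and $[(i+1)(i+2)\cdots(i+j)]\le w$; in the second case, $[(i+j)\cdots(i+1)i]\not\le w$ while $[(i+j-1)\cdots(i+1)i]\le w$ and $[(i+j)\cdots(i+2)(i+1)]\le w$ (the empty word denotes the identity, which is $\le w$). Let $\mathcal{W}(v,w)^{\uparrow}$ be the set of maximal subwords of $s$ that contain no element of $\mathcal{W}(v,w)$ as a subword. Then (identifying subwords of $s$ with the permutations they represent) $\mathcal{W}(v,w)^{\uparrow}$ is exactly the set of maximal elements of $B(v)\cap B(w)$.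
   Context: $\sigma_i=(i,i+1)$; $[a_1\cdots a_k]$ denotes the permutation $\sigma_{a_1}\cdots\sigma_{a_k}$; $\le$ is the Bruhat order on $\mathfrak{S}_n$ and $B(w)=\{u:u\le w\}$. A permutation is boolean if its reduced words contain no repeated letters; then every subword of a reduced word for $v$ is itself a reduced word. *)

From mathcomp Require Import all_boot all_order all_fingroup.
Set Implicit Arguments.
Unset Strict Implicit.
Unset Printing Implicit Defensive.

(* Permutations of {0,...,n-1} (= {1,...,n} shifted): 'S_n. A permutation v
   is used as a function 'I_n -> 'I_n. *)

(* simple transposition sigma_i = (i, i+1) in 1-based notation, i.e. swapping
   the 0-based points i-1 and i; identity if these points don't exist. *)
Definition sigma (n i : nat) : 'S_n :=
  match [pick x : 'I_n | val x == i.-1], [pick x : 'I_n | val x == i] with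
  | Some a, Some b => tperm a b
  | _, _ => 1%g
  end.

(* [a_1 ... a_k] = sigma_{a_1} o ... o sigma_{a_k} (function composition;
   note (p * q)%g x = q (p x) in mathcomp). *)
Definition word_perm (n : nat) (s : seq nat) : 'S_n :=
  foldr (fun a p => (p * sigma n a)%g) 1%g s.

Definition valid_word (n : nat) (s : seq nat) : bool :=
  all (fun a => (0 < a < n)%N) s.

Definition perm_length (n : nat) (v : 'S_n) : nat :=
  #|[set p : 'I_n * 'I_n | (val p.1 < val p.2)%N && (val (v p.2) < val (v p.1))%N]|.

Definition reduced_word (n : nat) (v : 'S_n) (s : seq nat) : Prop :=
  valid_word n s /\ word_perm n s = v /\ size s = perm_length v.

Definition boolean_perm (n : nat) (v : 'S_n) : Prop :=
  forall s, reduced_word v s -> uniq s.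

Definition bruhat_step (n : nat) (u x : 'S_n) : bool :=
  (perm_length u < perm_length x)%N &&
  [exists a : 'I_n, exists b : 'I_n, (a != b) && (x == (tperm a b * u)%g)].

Definition bruhat_le (n : nat) (u w : 'S_n) : bool := connect (@bruhat_step n) u w.

Definition max_lower_common (n : nat) (v w u : 'S_n) : Prop :=
  bruhat_le u v /\ bruhat_le u w /\
  forall x : 'S_n, bruhat_le x v -> bruhat_le x w -> bruhat_le u x -> x = u.

Definition in_W (n : nat) (w : 'S_n) (s t : seq nat) : Prop :=
  subseq t s /\
  exists i j : nat,
    (t = iota i j.+1 /\
       ~~ bruhat_le (word_perm n (iota i j.+1)) w /\
       bruhat_le (word_perm n (iota i j)) w /\
       bruhat_le (word_perm n (iota i.+1 j)) w)
    \/
    (t = rev (iota i j.+1) /\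
       ~~ bruhat_le (word_perm n (rev (iota i j.+1))) w /\
       bruhat_le (word_perm n (rev (iota i j))) w /\
       bruhat_le (word_perm n (rev (iota i.+1 j))) w).

Definition avoids_W (n : nat) (w : 'S_n) (s t : seq nat) : Prop :=
  subseq t s /\ forall u, in_W w s u -> ~ subseq u t.

Definition in_W_up (n : nat) (w : 'S_n) (s t : seq nat) : Prop :=
  avoids_W w s t /\ forall t', avoids_W w s t' -> subseq t t' -> t' = t.

(* Bruhat order is governed by the rank criterion (Björner–Brenti, Thm. 2.1.5): [u <= w]
   iff [rank_ge u p q <= rank_ge w p q] for all [p, q], where [rank_ge x p q] counts the
   positions [c < p] with [x c >= q].  For a word [t] without repeated letters these ranks
   are 0 or 1: for [p <= q], [rank_ge (word_perm n t) p q] records whether the decreasing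
   chain [q (q-1) ... p] is a subword of [t], and the ranks of the inverse record the
   increasing chains.  Hence, inside the boolean word [s], Bruhat order is subword order,
   everything below [word_perm n s] is a subword of [s], and a subword lies below [w] iff
   all its chains do.  A chain that is not below [w] contains a minimal such chain, which
   is an element of W(v,w); so the subwords avoiding W(v,w) are exactly the subwords below
   [w], and the maximal ones are the maximal elements of B(v) ∩ B(w). *)

From mathcomp Require Import all_boot all_order all_fingroup.
From mathcomp Require Import zify.
Set Implicit Arguments.
Unset Strict Implicit.
Unset Printing Implicit Defensive.

Section Ranks.
Variable n : nat.
Implicit Types (x y u w : 'S_n).

Definition rank_ge x (p q : nat) : nat := \sum_(c : 'I_n) ((c < p) && (q <= x c)).

Lemma sum_ord_lt q : \sum_(c : 'I_n) (c < q : nat) = minn q n.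
Proof.
rewrite -(big_mkord xpredT (fun c => (c < q : nat))).
elim: n => [|m IH]; first by rewrite big_geq // minn0.
by rewrite big_nat_recr //= IH; lia.
Qed.

Lemma rank_geS x (c : 'I_n) q : rank_ge x c.+1 q = rank_ge x c q + (q <= x c).
Proof.
rewrite /rank_ge (bigD1 c) //= [in RHS](bigD1 c) //= ltnS leqnn ltnn addnC.
congr (_ + _); apply: eq_bigr => d /negbTE dc.
by rewrite ltnS leq_eqVlt -[nat_of_ord d == c]/(d == c) dc.
Qed.

Lemma rank_ge_inv x p q : rank_ge x p q + minn q n = rank_ge (x^-1)%g q p + minn p n.
Proof.
have -> : rank_ge (x^-1)%g q p = \sum_(c : 'I_n) ((x c < q) && (p <= c)).
  by rewrite /rank_ge (reindex_inj (@perm_inj _ x)); apply: eq_bigr => c _; rewrite permK.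
rewrite -!sum_ord_lt [in LHS](reindex_inj (@perm_inj _ x)) /rank_ge -!big_split.
by apply: eq_bigr => c _; case: (ltnP c p); case: (ltnP (x c) q).
Qed.

Lemma rank_geSr x p (q : 'I_n) : rank_ge x p q = rank_ge x p q.+1 + ((x^-1)%g q < p).
Proof.
have := rank_ge_inv x p q; have := rank_ge_inv x p q.+1; rewrite rank_geS.
have : minn q.+1 n = (minn q n).+1 by have := ltn_ord q; lia.
by case: (leqP p ((x^-1)%g q)); lia.
Qed.

Lemma rank_ge_inv_diag x p : rank_ge (x^-1)%g p p = rank_ge x p p.
Proof. by have := rank_ge_inv x p p; lia. Qed.

Lemma rank_ge0_lt x p q (c : 'I_n) : rank_ge x p q = 0 -> c < p -> x c < q.
Proof. by move/eqP; rewrite sum_nat_eq0 => /forallP/(_ c) /[swap] ->; rewrite eqb0 ltnNge. Qed.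

Lemma rank_ge_mono x p p' q q' : p <= p' -> q' <= q ->
  rank_ge x p q <= rank_ge x p' q'.
Proof.
move=> pp' qq'; apply: leq_sum => c _.
by case: (ltnP c p) => // cp; case: (leqP q (x c)) => // qx /=; lia.
Qed.

Lemma rank_ge_pred_diag x a : 0 < a <= n -> rank_ge x a a = 0 -> rank_ge x a a.-1 = 1.
Proof.
move=> a_range x0; have := rank_ge_inv x a a.-1.
have := rank_ge_mono (x^-1)%g (leq_pred a) (leqnn a); rewrite rank_ge_inv_diag x0; lia.
Qed.

Lemma rank_ge_inj x y : (forall p q, rank_ge x p q = rank_ge y p q) -> x = y.
Proof.
move=> Exy; apply/permP => c; apply/val_inj/eqP.
have E q : (q <= x c) = (q <= y c).
  by have := Exy c.+1 q; rewrite !rank_geS Exy; case: (q <= x c); case: (q <= y c); lia.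
by rewrite eqn_leq -E leqnn E leqnn.
Qed.

Lemma rank_ge_le_inv u w : (forall p q, rank_ge u p q <= rank_ge w p q) ->
  forall p q, rank_ge (u^-1)%g p q <= rank_ge (w^-1)%g p q.
Proof.
by move=> le_uw p q; have := rank_ge_inv u q p; have := rank_ge_inv w q p; have := le_uw q p; lia.
Qed.

Lemma rank_ge_le_upper u w :
  (forall p k, rank_ge u p (p + k) <= rank_ge w p (p + k)) ->
  (forall p k, rank_ge (u^-1)%g p (p + k) <= rank_ge (w^-1)%g p (p + k)) ->
  forall p q, rank_ge u p q <= rank_ge w p q.
Proof.
move=> le_uw le_uw' p q; case: (leqP p q) => [/subnKC <-|/ltnW/subnKC qp]; first exact: le_uw.
have := rank_ge_inv u p q; have := rank_ge_inv w p q; have := le_uw' q (p - q); rewrite qp; lia.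
Qed.

Lemma perm_length_tpermM u (a b : 'I_n) : a < b -> u a < u b ->
  perm_length u < perm_length (tperm a b * u)%g.
Proof.
move=> ab uab; set t := tperm a b; set x := (t * u)%g.
have xE c : x c = u (t c) by rewrite permM.
have tK : involutive t := tpermK a b.
pose inv y := [set p : 'I_n * 'I_n | (p.1 < p.2) && (y p.2 < y p.1)].
(* [phi] relabels an inversion of [u] through [t] when this keeps it increasing; it lands
   among the inversions of [x] other than [(a, b)]. *)
pose phi (p : 'I_n * 'I_n) := if t p.1 < t p.2 then (t p.1, t p.2) else p.
have phi_inj : {in inv u &, injective phi}.
  move=> [c d] [c' d']; rewrite !inE /= => /andP[cd _] /andP[cd' _]; rewrite /phi /=.
  case: ifP => tcd; case: ifP => tcd' //.
  - by case=> /perm_inj-> /perm_inj->.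
  - by case=> E1 E2; move: tcd'; rewrite -E1 -E2 !tK cd.
  - by case=> E1 E2; move: tcd; rewrite E1 E2 !tK cd'.
have phi_sub : phi @: inv u \subset inv x :\ (a, b).
  apply/subsetP => _ /imsetP[[c d] /[!inE] /= /andP[cd ucd] ->].
  rewrite /phi /=; case: ifP => tcd /=.
    rewrite !xE !tK tcd ucd !andbT; apply: contraTneq cd => -[tca tdb].
    by rewrite -(tK c) -(tK d) tca tdb tpermL tpermR -leqNgt ltnW.
  rewrite !xE cd /=; apply/andP; split.
    by apply: contraTneq ucd => -[-> ->]; rewrite -leqNgt ltnW.
  move: cd ucd tcd; rewrite /t.
  by case: tpermP => [->|->|_ _]; case: tpermP => [->|->|_ _]; lia.
have ab_inv : (a, b) \in inv x by rewrite inE /= !xE tpermL tpermR ab uab.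
rewrite [perm_length u](_ : _ = #|inv u|) // -(card_in_imset phi_inj).
apply: leq_ltn_trans (subset_leq_card phi_sub) _.
by rewrite [perm_length x](cardsD1 (a, b)) ab_inv.
Qed.

Lemma rank_ge_tpermM u (a b : 'I_n) p q : a < b -> u a < u b ->
  rank_ge (tperm a b * u)%g p q = rank_ge u p q + ((a < p <= b) && (u a < q <= u b)).
Proof.
move=> ab uab; have a_neq_b : a != b by rewrite neq_ltn ab.
have split_ab (G : 'I_n -> nat) :
    \sum_(c : 'I_n) G c = G a + G b + \sum_(c : 'I_n | (c != a) && (c != b)) G c.
  by rewrite (bigD1 a) // (bigD1 b) 1?eq_sym //= addnA.
rewrite /rank_ge !split_ab !permM tpermL tpermR.
rewrite (eq_bigr (fun c : 'I_n => ((c < p) && (q <= u c) : nat))); last first.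
  by move=> c /andP[ca cb]; rewrite permM tpermD // eq_sym.
move: (\sum_(c < n | _) _) => rest.
by case: (ltnP a p); case: (leqP p b); case: (leqP q (u a)); case: (leqP q (u b)) => /=; lia.
Qed.

Lemma bruhat_step_rank_ge u x : bruhat_step u x ->
  forall p q, rank_ge u p q <= rank_ge x p q.
Proof.
case/andP=> lt_ux /existsP[a /existsP[b /andP[a_neq_b /eqP xE]]] p q; subst x.
wlog ab : a b a_neq_b lt_ux / a < b.
  move=> W; case: (ltngtP a b) => [|ba|/val_inj abE]; first exact: W.
  - by rewrite tpermC; apply: W; rewrite 1?eq_sym // tpermC.
  - by rewrite abE eqxx in a_neq_b.
case: (ltngtP (u a) (u b)) => [uab|uba|/val_inj/perm_inj abE].
- by rewrite rank_ge_tpermM // leq_addr.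
- have := perm_length_tpermM (u := (tperm a b * u)%g) ab.
  rewrite mulgA tperm2 mul1g !permM tpermL tpermR => /(_ uba) lt_xu.
  by have := ltn_trans lt_ux lt_xu; rewrite ltnn.
- by rewrite abE eqxx in a_neq_b.
Qed.

Lemma bruhat_le_rank_ge u w : bruhat_le u w ->
  forall p q, rank_ge u p q <= rank_ge w p q.
Proof.
case/connectP=> path step_path ->; elim: path u step_path => //= y path IH u.
by case/andP=> /bruhat_step_rank_ge le_uy /IH le_yw p q; apply: leq_trans (le_uy p q) (le_yw p q).
Qed.

Lemma first_difference u w : u != w -> (forall p q, rank_ge u p q <= rank_ge w p q) ->
  exists a : 'I_n, (forall c : 'I_n, c < a -> u c = w c) /\ u a < w a.
Proof.
move=> u_neq_w le_uw.
have [c0 uwc0] : exists c, u c != w c.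
  by apply/existsP; apply: contraNT u_neq_w => /existsPn uw; apply/eqP/permP => c; apply/eqP/negPn.
case: (arg_minnP (fun c : 'I_n => val c) (uwc0 : (fun c => u c != w c) c0)) => a uwa a_min.
have uw_below (c : 'I_n) : c < a -> u c = w c.
  by move=> ca; apply/eqP; apply: contraTT ca => /a_min; rewrite -leqNgt.
exists a; split => //; rewrite ltn_neqAle val_eqE uwa /=.
have := le_uw a.+1 (u a); rewrite !rank_geS leqnn.
suff -> : rank_ge u a (u a) = rank_ge w a (u a) by rewrite leq_add2l lt0b.
by apply: eq_bigr => c _; case: ltnP => //= /uw_below ->.
Qed.

Lemma exists_tperm_below u w (a : 'I_n) :
  (forall c : 'I_n, c < a -> u c = w c) -> u a < w a ->
  (forall p q, rank_ge u p q <= rank_ge w p q) ->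
  exists b : 'I_n, [/\ a < b, u a < u b &
    forall p q, rank_ge (tperm a b * u)%g p q <= rank_ge w p q].
Proof.
move=> uw_below uwa le_uw; pose b0 := (u^-1)%g (w a).
have ub0 : u b0 = w a by rewrite permKV.
have ab0 : a < b0.
  case: (ltngtP a b0) => // [b0a|/val_inj ab0E].
    by have := uw_below _ b0a; rewrite ub0 => /perm_inj b0E; rewrite b0E ltnn in b0a.
  by move: ub0; rewrite -ab0E => uwE; rewrite uwE ltnn in uwa.
have Pb0 : [&& a < b0, u a < u b0 & u b0 <= w a] by rewrite ab0 ub0 uwa /=.
case: (@arg_minnP _ b0 (fun c => [&& a < c, u a < u c & u c <= w a]) val Pb0).
move=> b /and3P[ab uab ubw] b_min.
exists b; split => // p q; rewrite rank_ge_tpermM //.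
case: andP => [[/andP[ap pb] /andP[uaq qub]] | _]; last by rewrite addn0.
have q_wa : q <= w a := leq_trans qub ubw.
pose window x := \sum_(c : 'I_n) ((c < p) && (q <= x c <= w a)).
have rank_window x : rank_ge x p q = rank_ge x p (w a).+1 + window x.
  rewrite /rank_ge /window -big_split; apply: eq_bigr => c _ /=.
  by case: (c < p) => //=; case: (leqP q (x c)); case: (leqP (x c) (w a)) => /=; lia.
suff : window u < window w by have := le_uw p (w a).+1; rewrite !rank_window; lia.
rewrite /window (bigD1 a) //= [X in _ < X](bigD1 a) //= ap leqnn q_wa (leqNgt q) uaq.
rewrite add1n ltnS; apply: leq_sum => c ca; case: (ltngtP c a) => [/uw_below -> //|ac|/val_inj cE].
- case: and3P => // -[cp qc cw]; have /b_min : [&& a < c, u a < u c & u c <= w a].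
    by rewrite ac cw andbT; apply: leq_trans uaq qc.
  by move=> /= bc; move: cp pb bc; lia.
- by rewrite cE eqxx in ca.
Qed.

Lemma exists_bruhat_step_below u w : u != w ->
  (forall p q, rank_ge u p q <= rank_ge w p q) ->
  exists2 x, bruhat_step u x & forall p q, rank_ge x p q <= rank_ge w p q.
Proof.
move=> u_neq_w le_uw; have [a [uw_below uwa]] := first_difference u_neq_w le_uw.
have [b [ab uab le_xw]] := exists_tperm_below uw_below uwa le_uw.
exists (tperm a b * u)%g => //; rewrite /bruhat_step perm_length_tpermM //=.
by apply/existsP; exists a; apply/existsP; exists b; rewrite neq_ltn ab eqxx.
Qed.

Lemma rank_ge_bruhat_le u w : (forall p q, rank_ge u p q <= rank_ge w p q) ->
  bruhat_le u w.
Proof.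
have length_bound x : perm_length x <= n * n.
  by apply: leq_trans (max_card _) _; rewrite card_prod card_ord.
suff bounded k y : n * n - perm_length y < k ->
    (forall p q, rank_ge y p q <= rank_ge w p q) -> bruhat_le y w.
  exact: (bounded (n * n - perm_length u).+1).
elim: k y => // k IH y k_bound le_yw; have [->|y_neq_w] := eqVneq y w; first exact: connect0.
have [x yx le_xw] := exists_bruhat_step_below y_neq_w le_yw.
apply: connect_trans (connect1 yx) (IH x _ le_xw).
by have := length_bound x; case/andP: yx; lia.
Qed.

Lemma bruhat_leP u w : bruhat_le u w <-> forall p q, rank_ge u p q <= rank_ge w p q.
Proof. by split; [apply: bruhat_le_rank_ge | apply: rank_ge_bruhat_le]. Qed.

End Ranks.

Lemma rev_iotaS p k : rev (iota p k.+1) = p + k :: rev (iota p k).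
Proof. by rewrite -addn1 iotaD rev_cat. Qed.

Section Words.
Variable n : nat.

Lemma sigma_val a (z : 'I_n) : 0 < a < n ->
  sigma n a z = (if z == a.-1 :> nat then a else if z == a :> nat then a.-1 else z) :> nat.
Proof.
case/andP=> a_gt0 a_lt_n; rewrite /sigma.
have a1_lt_n : a.-1 < n := leq_ltn_trans (leq_pred a) a_lt_n.
case: pickP => [a' /eqP a'E|/(_ (Ordinal a1_lt_n))]; last by rewrite eqxx.
case: pickP => [b' /eqP b'E|/(_ (Ordinal a_lt_n))]; last by rewrite eqxx.
case: tpermP => [->|->|za zb]; rewrite ?a'E ?b'E ?eqxx //; first by case: eqP; lia.
have /negbTE-> : z != a.-1 :> nat by apply: contra_not_neq za => zE; apply: val_inj; rewrite /= zE.
by have /negbTE-> : z != a :> nat by apply: contra_not_neq zb => zE; apply: val_inj; rewrite /= zE.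
Qed.

Lemma sigma_ge a q (z : 'I_n) : 0 < a < n -> q != a -> (q <= sigma n a z) = (q <= z).
Proof.
move=> a_range /eqP qa; rewrite sigma_val //.
by case: ifP => /eqP ?; [|case: ifP => /eqP ?]; lia.
Qed.

Lemma sigma_ge_self a (z : 'I_n) : 0 < a < n -> z < a -> (a <= sigma n a z) = (a.-1 <= z).
Proof.
move=> a_range za; rewrite sigma_val //.
by case: ifP => /eqP ?; [|case: ifP => /eqP ?]; lia.
Qed.

Lemma sigmaV a : ((sigma n a)^-1)%g = sigma n a.
Proof.
rewrite /sigma; case: [pick x : 'I_n | val x == a.-1] => [?|];
  by case: [pick x : 'I_n | val x == a] => [?|]; rewrite ?tpermV ?invg1.
Qed.

Lemma word_perm_cat s t : word_perm n (s ++ t) = (word_perm n t * word_perm n s)%g.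
Proof. by elim: s => [|a s IH] /=; rewrite ?mulg1 // IH mulgA. Qed.

Lemma word_perm_rev t : word_perm n (rev t) = ((word_perm n t)^-1)%g.
Proof.
elim: t => [|a t IH]; first by rewrite invg1.
by rewrite rev_cons -cats1 word_perm_cat IH /= mul1g invMg sigmaV.
Qed.

Lemma rank_ge_word_perm t p k : uniq t -> valid_word n t ->
  rank_ge (word_perm n t) p (p + k) = subseq (rev (iota p k.+1)) t.
Proof.
elim: t p k => [|a t IH] p k.
  move=> _ _; rewrite rev_iotaS /rank_ge big1 // => c _.
  by rewrite perm1; case: ltnP => //= cp; rewrite leqNgt ltn_addr.
case/andP=> a_t ut /andP[a_range vt]; set y := word_perm n t.
have yaE c : (y * sigma n a)%g c = sigma n a (y c) by rewrite permM.
rewrite rev_iotaS /=; have [pka|pka] := eqVneq (p + k) a; last first.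
  by rewrite -rev_iotaS -IH //; apply: eq_bigr => c _; rewrite yaE sigma_ge.
rewrite [p + k]pka -/y.
have y_low : rank_ge y p a = 0.
  rewrite -pka IH // rev_iotaS pka; apply/eqP; rewrite eqb0.
  by apply: contra a_t => /mem_subseq; apply; apply: mem_head.
have -> : rank_ge (y * sigma n a)%g p a = rank_ge y p a.-1.
  apply: eq_bigr => c _; rewrite yaE; case: ltnP => //= cp.
  by rewrite sigma_ge_self // (rank_ge0_lt y_low cp).
case: k pka => [|k] pka; last by rewrite -pka addnS /= /y IH.
by rewrite addn0 in pka; subst p; rewrite rank_ge_pred_diag // ?sub0seq //; lia.
Qed.

Lemma rank_ge_word_perm_inv t p k : uniq t -> valid_word n t ->
  rank_ge ((word_perm n t)^-1)%g p (p + k) = subseq (iota p k.+1) t.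
Proof.
move=> ut vt; rewrite -word_perm_rev rank_ge_word_perm ?subseq_rev ?rev_uniq //.
by rewrite /valid_word all_rev.
Qed.

End Words.

Lemma subseq_pair_swap (T : eqType) (s : seq T) (a b : T) :
  uniq s -> subseq [:: a; b] s -> subseq [:: b; a] s -> a = b.
Proof.
move=> us /(subseq_uniqP us) ab /(subseq_uniqP us) ba.
suff [] : [:: a; b] = [:: b; a] by [].
by rewrite ab ba; apply: eq_filter => c; rewrite !inE orbC.
Qed.

Section BooleanWords.
Variable n : nat.
Implicit Types (x u w : 'S_n) (s t : seq nat).

Lemma bruhat_le_of_upper u w :
  (forall p k, rank_ge u p (p + k) <= rank_ge w p (p + k)) ->
  (forall p k, rank_ge (u^-1)%g p (p + k) <= rank_ge (w^-1)%g p (p + k)) ->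
  bruhat_le u w.
Proof. by move=> le_uw le_uwV; apply/bruhat_leP/rank_ge_le_upper. Qed.

Lemma bruhat_le1 w : bruhat_le 1%g w.
Proof.
have wp0 : word_perm n [::] = 1%g by [].
by apply: bruhat_le_of_upper => p k; rewrite ?invg1 -wp0 rank_ge_word_perm // rev_iotaS.
Qed.

Lemma valid_word_subseq s t : subseq t s -> valid_word n s -> valid_word n t.
Proof. by move/mem_subseq=> ts /allP vs; apply/allP => a /ts/vs. Qed.

Lemma bruhat_le_subseq t t' : uniq t' -> valid_word n t' -> subseq t t' ->
  bruhat_le (word_perm n t) (word_perm n t').
Proof.
move=> ut' vt' tt'; have ut := subseq_uniq tt' ut'; have vt := valid_word_subseq tt' vt'.
apply: bruhat_le_of_upper => p k;
  rewrite ?rank_ge_word_perm ?rank_ge_word_perm_inv //;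
  by case E: (subseq _ t) => //; rewrite (subseq_trans E tt').
Qed.

Lemma bruhat_le_subseqE s t t' : uniq s -> valid_word n s -> subseq t s -> subseq t' s ->
  bruhat_le (word_perm n t) (word_perm n t') = subseq t t'.
Proof.
move=> us vs ts t's; have [ut' vt'] := (subseq_uniq t's us, valid_word_subseq t's vs).
apply/idP/idP=> [/bruhat_leP le_tt'|]; last exact: bruhat_le_subseq.
have in_t t0 a : subseq t0 s -> (a \in t0 : nat) = rank_ge (word_perm n t0) a (a + 0).
  move=> t0s; rewrite rank_ge_word_perm ?(subseq_uniq t0s) ?(valid_word_subseq t0s) //.
  by rewrite sub1seq.
rewrite (elimT (subseq_uniqP us) t's) subseq_filter ts andbT; apply/allP => a.
by have := le_tt' a (a + 0); rewrite -!in_t //; case: (a \in t); case: (a \in t').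
Qed.

Lemma bruhat_le_of_chains t w : uniq t -> valid_word n t ->
  (forall p k, subseq (rev (iota p k.+1)) t -> bruhat_le (word_perm n (rev (iota p k.+1))) w) ->
  (forall p k, subseq (iota p k.+1) t -> bruhat_le (word_perm n (iota p k.+1)) w) ->
  bruhat_le (word_perm n t) w.
Proof.
move=> ut vt dchain_le ichain_le.
have chain_ok c : subseq c t -> uniq c /\ valid_word n c.
  by move=> ct; split; [apply: subseq_uniq ct ut | apply: valid_word_subseq ct vt].
apply: bruhat_le_of_upper => p k.
  rewrite rank_ge_word_perm //; case E: (subseq _ t) => //.
  have [uc vc] := chain_ok _ E.
  by have /bruhat_leP/(_ p (p + k)) := dchain_le p k E; rewrite rank_ge_word_perm ?subseq_refl.
rewrite rank_ge_word_perm_inv //; case E: (subseq _ t) => //.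
have [uc vc] := chain_ok _ E.
have /bruhat_leP/rank_ge_le_inv/(_ p (p + k)) := ichain_le p k E.
by rewrite rank_ge_word_perm_inv ?subseq_refl.
Qed.

Section BelowBooleanWord.
Variables (s : seq nat) (x : 'S_n).
Hypotheses (us : uniq s) (vs : valid_word n s).
Hypothesis le_x : forall p q, rank_ge x p q <= rank_ge (word_perm n s) p q.
Hypothesis le_xV : forall p q, rank_ge (x^-1)%g p q <= rank_ge ((word_perm n s)^-1)%g p q.

Let t := [seq a <- s | 0 < rank_ge x a a].

Lemma rank_ge_pos_subseq p k : 0 < rank_ge x p (p + k) -> subseq (rev (iota p k.+1)) t.
Proof.
move=> x_pos; rewrite subseq_filter; apply/andP; split.
  apply/allP => a; rewrite mem_rev mem_iota => /andP[pa ap]; apply: leq_trans x_pos _.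
  by apply: rank_ge_mono; lia.
by have := le_x p (p + k); rewrite rank_ge_word_perm //; case: subseq => //; lia.
Qed.

Lemma subseq_rank_ge_pos k p : subseq (rev (iota p k.+1)) t -> 0 < rank_ge x p (p + k).
Proof.
have ts : subseq t s := filter_subseq _ s.
elim: k => [|k IH]; first by rewrite addn0 /= sub1seq mem_filter => /andP[].
rewrite rev_iotaS => chain_t; set q := p + k.
have /IH x_pos : subseq (rev (iota p k.+1)) t := cons_subseq chain_t.
have := mem_subseq chain_t (mem_head _ _); rewrite mem_filter addnS -/q => /andP[xq1_pos q1s].
have q_lt_n : q < n by have := allP vs _ q1s; lia.
(* [[:: q; q.+1]] is not a subword of [s], so [x^-1] sends no [d < q] to [q.+1] or above,
   whereas [q.+1 \in t] says it sends some [d <= q] there: necessarily [d = q]. *)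
have x_high : p <= (x^-1)%g (Ordinal q_lt_n).
  have dec_pair : subseq [:: q.+1; q] s.
    apply: subseq_trans (subseq_trans chain_t ts).
    by rewrite rev_iotaS addnS /= !eqxx sub0seq.
  have inc_pair : subseq [:: q; q.+1] s = false.
    by apply/negP => /(subseq_pair_swap us)/(_ dec_pair); lia.
  have := le_xV q (q + 1); rewrite rank_ge_word_perm_inv // /= addn1 inc_pair leqn0.
  move=> /eqP xV_low; have := rank_geS (x^-1)%g (Ordinal q_lt_n) q.+1.
  rewrite /= xV_low rank_ge_inv_diag; move: xq1_pos; case: leqP => /=; lia.
by move: x_pos; rewrite (rank_geSr x p (Ordinal q_lt_n)) [(_ < p)]ltnNge x_high addn0.
Qed.

Lemma rank_ge_below_boolean p k : rank_ge x p (p + k) = subseq (rev (iota p k.+1)) t.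
Proof.
have x_le1 : rank_ge x p (p + k) <= 1.
  by apply: leq_trans (le_x p (p + k)) _; rewrite rank_ge_word_perm // leq_b1.
case E: (subseq _ t); first by have := subseq_rank_ge_pos E; lia.
by case: (posnP (rank_ge x p (p + k))) => [-> //|/rank_ge_pos_subseq]; rewrite E.
Qed.

End BelowBooleanWord.

Lemma bruhat_le_word_perm_subseq s x : uniq s -> valid_word n s ->
  bruhat_le x (word_perm n s) -> exists2 t, subseq t s & x = word_perm n t.
Proof.
move=> us vs /bruhat_leP le_x; have le_xV := rank_ge_le_inv le_x.
set t := [seq a <- s | 0 < rank_ge x a a]; exists t; first exact: filter_subseq.
have ts : subseq t s := filter_subseq _ s.
have [ut vt] := (subseq_uniq ts us, valid_word_subseq ts vs).
have rank_x p k : rank_ge x p (p + k) = rank_ge (word_perm n t) p (p + k).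
  by rewrite rank_ge_word_perm // (rank_ge_below_boolean us vs le_x le_xV).
have rank_xV p k : rank_ge (x^-1)%g p (p + k) = rank_ge ((word_perm n t)^-1)%g p (p + k).
  rewrite rank_ge_word_perm_inv // -subseq_rev.
  have -> : t = [seq a <- s | 0 < rank_ge (x^-1)%g a a].
    by apply: eq_filter => a; rewrite rank_ge_inv_diag.
  rewrite -filter_rev.
  have vs' : valid_word n (rev s) by rewrite /valid_word all_rev.
  by apply: rank_ge_below_boolean; rewrite ?rev_uniq ?word_perm_rev ?invgK.
apply: rank_ge_inj => p q; apply/eqP; rewrite eqn_leq.
by rewrite !rank_ge_le_upper // => p' k; rewrite ?rank_x ?rank_xV.
Qed.

End BooleanWords.

Lemma minimal_failure (T : eqType) (f : nat -> nat -> seq T) (P : pred (seq T)) :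
  (forall i, P (f i 0)) ->
  (forall i j, subseq (f i j) (f i j.+1)) -> (forall i j, subseq (f i.+1 j) (f i j.+1)) ->
  forall j i, ~~ P (f i j.+1) -> exists i' j',
    [/\ subseq (f i' j'.+1) (f i j.+1), ~~ P (f i' j'.+1), P (f i' j') & P (f i'.+1 j')].
Proof.
move=> P0 sub_l sub_r; elim=> [|j IH] i fail_ij; first by exists i, 0; rewrite subseq_refl.
case: (boolP (P (f i j.+1))) => [ok_l|/IH [i' [j' [sub ?]]]]; last first.
  by exists i', j'; split=> //; apply: subseq_trans sub (sub_l _ _).
case: (boolP (P (f i.+1 j.+1))) => [ok_r|/IH [i' [j' [sub ?]]]]; last first.
  by exists i', j'; split=> //; apply: subseq_trans sub (sub_r _ _).
by exists i, j.+1; rewrite subseq_refl.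
Qed.

Section AvoidingW.
Variables (n : nat) (w : 'S_n) (s : seq nat).
Hypotheses (us : uniq s) (vs : valid_word n s).

Lemma failing_ichain_in_W i j : subseq (iota i j.+1) s ->
  ~~ bruhat_le (word_perm n (iota i j.+1)) w -> exists2 c, in_W w s c & subseq c (iota i j.+1).
Proof.
move=> chain_s fail.
have [||| i' [j' [sub fail' ok_l ok_r]]] :=
  minimal_failure (f := iota) (P := fun c => bruhat_le (word_perm n c) w) _ _ _ fail.
- by move=> i0; apply: bruhat_le1.
- by move=> i0 j0; rewrite -addn1 iotaD prefix_subseq.
- by move=> i0 j0; apply: subseq_cons.
exists (iota i' j'.+1) => //; split; first exact: subseq_trans sub chain_s.
by exists i', j'; left.
Qed.

Lemma failing_dchain_in_W i j : subseq (rev (iota i j.+1)) s ->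
  ~~ bruhat_le (word_perm n (rev (iota i j.+1))) w ->
  exists2 c, in_W w s c & subseq c (rev (iota i j.+1)).
Proof.
move=> chain_s fail.
have [||| i' [j' [sub fail' ok_l ok_r]]] := minimal_failure
  (f := fun i j => rev (iota i j)) (P := fun c => bruhat_le (word_perm n c) w) _ _ _ fail.
- by move=> i0; apply: bruhat_le1.
- by move=> i0 j0; rewrite subseq_rev -addn1 iotaD prefix_subseq.
- by move=> i0 j0; rewrite subseq_rev; apply: subseq_cons.
exists (rev (iota i' j'.+1)) => //; split; first exact: subseq_trans sub chain_s.
by exists i', j'; right.
Qed.

Lemma avoids_W_bruhat_le t : subseq t s ->
  avoids_W w s t <-> bruhat_le (word_perm n t) w.
Proof.
move=> ts; have [ut vt] := (subseq_uniq ts us, valid_word_subseq ts vs).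
split=> [[_ avoid]|le_tw].
  apply: bruhat_le_of_chains => // p k chain_t; apply/negPn/negP => fail.
    have [c cW c_sub] := failing_dchain_in_W (subseq_trans chain_t ts) fail.
    exact: avoid cW (subseq_trans c_sub chain_t).
  have [c cW c_sub] := failing_ichain_in_W (subseq_trans chain_t ts) fail.
  exact: avoid cW (subseq_trans c_sub chain_t).
split=> // c [_ [i [j [[-> [fail _]]|[-> [fail _]]]]]] ct; move/negP: fail; apply;
  apply: connect_trans le_tw; rewrite -[connect _ _ _]/(bruhat_le _ _);
  by rewrite (bruhat_le_subseqE us vs (subseq_trans ct ts) ts).
Qed.

End AvoidingW.

Unset Implicit Arguments.

Theorem proposition3p7 (n : nat) (v w : 'S_n) (s : seq nat) :
  boolean_perm v -> reduced_word v s ->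
  forall u : 'S_n,
    (exists t, in_W_up w s t /\ word_perm n t = u) <-> max_lower_common v w u.
Proof.
move=> v_bool s_red u; have us : uniq s := v_bool s s_red.
case: s_red => vs [<- _]; split.
- move=> [t [[avoid_t t_max] <-]]; have ts : subseq t s := avoid_t.1.
  split; first exact: bruhat_le_subseq.
  split; first exact/(avoids_W_bruhat_le w us vs ts).
  move=> x x_le_s; have [t' t's ->] := bruhat_le_word_perm_subseq us vs x_le_s.
  move=> t'_le_w; rewrite (bruhat_le_subseqE us) // => tt'; congr word_perm.
  by apply: t_max tt'; apply/(avoids_W_bruhat_le w us vs t's).
- move=> [u_le_s]; have [t ts ->] := bruhat_le_word_perm_subseq us vs u_le_s.
  move=> [t_le_w t_max]; exists t; split=> //.
  split; first exact/(avoids_W_bruhat_le w us vs ts).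
  move=> t' avoid_t' tt'; have t's : subseq t' s := avoid_t'.1.
  have t'_le_w := (avoids_W_bruhat_le w us vs t's).1 avoid_t'.
  apply: subseq_anti; rewrite tt' andbT -(bruhat_le_subseqE us vs t's ts).
  rewrite (t_max (word_perm n t')) ?(bruhat_le_subseqE us) //; exact: connect0.
Qed.
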